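(* Let $I\subseteq\mathbb{R}_+$ be a nonempty, non-singleton interval and let $n\in\mathbb{N}$. If $\Phi: I\to\mathbb{R}_+$ is subadditive of order $n$, then $\Phi$ is also subadditive of order $n+1$.
   Context: $\mathbb{R}_+$ denotes the set of nonnegative real numbers. For $n\in\mathbb{N}$, a function $\Phi: I\to\mathbb{R}_+$ is called subadditive of order $n$ if for all $x,y\in I$ with $y>0$ and $x+y\in I$ one has $\Phi(x+y)\leq \Phi(x)+\frac{(x+y)^n-x^n}{y^n}\Phi(y)$. *)

From HB Require Import structures.
From mathcomp Require Import all_boot all_order all_algebra.
From mathcomp Require Import reals.
Set Implicit Arguments. Unset Strict Implicit. Unset Printing Implicit Defensive.
Import Order.TTheory GRing.Theory Num.Theory.
Local Open Scope ring_scope.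

Definition subadditive_of_order (R : realType) (I : interval R) (n : nat)
  (Phi : R -> R) : Prop :=
  forall x y : R, x \in I -> y \in I -> 0 < y -> x + y \in I ->
    Phi (x + y) <= Phi x + ((x + y) ^+ n - x ^+ n) / y ^+ n * Phi y.

From HB Require Import structures.
From mathcomp Require Import all_boot all_order all_algebra.
From mathcomp Require Import reals.
From mathcomp Require Import ring.
Import Order.TTheory GRing.Theory Num.Theory.
Local Open Scope ring_scope.

(* The coefficient ((x + y)^n - x^n) / y^n of Phi(y) is nondecreasing in n
   when x >= 0 and y > 0, and Phi(y) >= 0, so each inequality of order n
   implies the one of order n + 1. *)

Lemma subadditive_coef_leS (R : numFieldType) (n : nat) (x y : R) :
  0 <= x -> 0 < y ->
  ((x + y) ^+ n - x ^+ n) / y ^+ n <= ((x + y) ^+ n.+1 - x ^+ n.+1) / y ^+ n.+1.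
Proof.
move=> x_ge0 y_gt0.
set d := (x + y) ^+ n - x ^+ n.
have d_ge0 : 0 <= d.
  by rewrite subr_ge0 lerXn2r ?nnegrE ?lerDl ?addr_ge0 // ltW.
rewrite ler_pdivlMr ?exprn_gt0 // exprSr mulrA divfK ?expf_neq0 ?gt_eqF //.
have -> : (x + y) ^+ n.+1 - x ^+ n.+1 = d * y + (x * d + y * x ^+ n).
  by rewrite /d !exprS; ring.
by rewrite lerDl addr_ge0 ?mulr_ge0 ?exprn_ge0 // ltW.
Qed.

Lemma subadditive_of_orderS (R : realType) (I : interval R) (n : nat)
    (Phi : R -> R) :
  (forall x : R, x \in I -> 0 <= x) ->
  (forall x : R, x \in I -> 0 <= Phi x) ->
  subadditive_of_order I n Phi -> subadditive_of_order I n.+1 Phi.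
Proof.
move=> I_ge0 Phi_ge0 Phi_sub x y xI yI y_gt0 xyI.
apply: le_trans (Phi_sub x y xI yI y_gt0 xyI) _.
by rewrite lerD2l ler_wpM2r ?Phi_ge0 ?subadditive_coef_leS ?I_ge0.
Qed.

Theorem theorem2p1 (R : realType) (I : interval R) (n : nat) (Phi : R -> R) :
  (forall x : R, x \in I -> 0 <= x) ->
  (exists a b : R, [/\ a \in I, b \in I & a < b]) ->
  (forall x : R, x \in I -> 0 <= Phi x) ->
  subadditive_of_order I n Phi ->
  subadditive_of_order I n.+1 Phi.
Proof. by move=> I_ge0 _ Phi_ge0; exact: subadditive_of_orderS. Qed.
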